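(* Let $\Theta_i,\Theta_j,\Theta_k\in[0,\pi)$ satisfy $\cos\Theta_i+\cos\Theta_j\cos\Theta_k\ge0$, $\cos\Theta_j+\cos\Theta_k\cos\Theta_i\ge0$, $\cos\Theta_k+\cos\Theta_i\cos\Theta_j\ge0$. In hyperbolic geometry, for every $\epsilon>0$ there exists $L>0$ such that for all $r_i,r_j,r_k>0$ with $r_i>L$, the inner angle $\vartheta_i$ at the center of radius $r_i$ of the triangle of centers of three disks of radii $r_i,r_j,r_k$ meeting in exterior intersection angles $\Theta_i,\Theta_j,\Theta_k$ satisfies $\vartheta_i<\epsilon$. In particular $\lim_{r_i\to+\infty}\vartheta_i=0$ (uniformly in $r_j,r_k$).
   Context: The triangle is the hyperbolic triangle with side lengths $l_i,l_j,l_k$ given by $\cosh l_i=\cosh r_j\cosh r_k+\sinh r_j\sinh r_k\cos\Theta_i$ and cyclically; $\vartheta_i$ is the angle opposite $l_i$. *)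

From Stdlib Require Import Reals.
Open Scope R_scope.

Definition arcosh (x : R) : R := ln (x + sqrt (x * x - 1)).

(* length of the side joining the centers of the disks of radii ra, rb
   meeting with exterior intersection angle Th:
   cosh l = cosh ra cosh rb + sinh ra sinh rb cos Th *)
Definition side_len (ra rb Th : R) : R :=
  arcosh (cosh ra * cosh rb + sinh ra * sinh rb * cos Th).

(* inner angle opposite the side of length la in the hyperbolic triangle with
   side lengths la, lb, lc (hyperbolic law of cosines) *)
Definition hyp_angle (la lb lc : R) : R :=
  acos ((cosh lb * cosh lc - cosh la) / (sinh lb * sinh lc)).

(* inner angle vartheta_i at the center of radius ri of the triangle of centers
   of three disks with radii ri, rj, rk and exterior intersection angles
   Thi, Thj, Thk; l_i is opposite center i: cosh l_i = cosh r_j cosh r_k + ... *)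
Definition vartheta_i (ri rj rk Thi Thj Thk : R) : R :=
  let li := side_len rj rk Thi in
  let lj := side_len rk ri Thj in
  let lk := side_len ri rj Thk in
  hyp_angle li lj lk.

(* Write a = cosh r_i, b = cosh r_j, c = cosh r_k.  Since sinh <= cosh, the
   side cosines satisfy cosh l_i <= 2bc, cosh l_j >= (1 + cos Theta_j)/2 * ca and
   cosh l_k >= (1 + cos Theta_k)/2 * ab, and the factors 1 + cos Theta are
   positive because Theta < pi.  With sinh l <= cosh l the hyperbolic law of
   cosines then gives
     cos vartheta_i >= 1 - cosh l_i / (cosh l_j cosh l_k)
                    >= 1 - 8 / ((1 + cos Theta_j) (1 + cos Theta_k) a^2),
   uniformly in r_j and r_k. *)

From Stdlib Require Import Reals Lra.
Open Scope R_scope.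

Lemma cosh_ge_1 (x : R) : 1 <= cosh x.
Proof.
  unfold cosh.
  pose proof (exp_ineq1_le x). pose proof (exp_ineq1_le (- x)).
  lra.
Qed.

Lemma sinh_ge_0 (x : R) : 0 <= x -> 0 <= sinh x.
Proof.
  intros Hx. rewrite <- sinh_0.
  destruct (Req_dec x 0) as [-> | Hx0]; [lra |].
  apply Rlt_le, sinh_lt. lra.
Qed.

Lemma sinh_lt_cosh (x : R) : sinh x < cosh x.
Proof. unfold sinh, cosh. pose proof (exp_pos (- x)). lra. Qed.

Lemma half_lt_cosh (x : R) : x / 2 < cosh x.
Proof.
  unfold cosh. pose proof (exp_ineq1_le x). pose proof (exp_pos (- x)). lra.
Qed.

Lemma cosh_minus (x y : R) : cosh (x - y) = cosh x * cosh y - sinh x * sinh y.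
Proof.
  unfold cosh, sinh, Rminus.
  rewrite !exp_plus, Ropp_plus_distr, exp_plus, Ropp_involutive.
  field.
Qed.

Lemma exp_opp_arcosh (y : R) : 1 <= y ->
  exp (- arcosh y) = y - sqrt (y * y - 1).
Proof.
  intros Hy. unfold arcosh.
  pose proof (sqrt_pos (y * y - 1)) as Hs0.
  assert (Hs : sqrt (y * y - 1) * sqrt (y * y - 1) = y * y - 1)
    by (apply sqrt_sqrt; nra).
  rewrite exp_Ropp, exp_ln by lra.
  apply Rmult_eq_reg_l with (y + sqrt (y * y - 1)); [| lra].
  rewrite Rinv_r by lra. nra.
Qed.

Lemma cosh_arcosh (y : R) : 1 <= y -> cosh (arcosh y) = y.
Proof.
  intros Hy. unfold cosh. rewrite exp_opp_arcosh by exact Hy.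
  unfold arcosh. rewrite exp_ln by (pose proof (sqrt_pos (y * y - 1)); lra).
  field.
Qed.

Lemma sinh_arcosh (y : R) : 1 <= y -> sinh (arcosh y) = sqrt (y * y - 1).
Proof.
  intros Hy. unfold sinh. rewrite exp_opp_arcosh by exact Hy.
  unfold arcosh. rewrite exp_ln by (pose proof (sqrt_pos (y * y - 1)); lra).
  field.
Qed.

Definition cosh_side (ra rb Th : R) : R :=
  cosh ra * cosh rb + sinh ra * sinh rb * cos Th.

Lemma side_len_arcosh (ra rb Th : R) : side_len ra rb Th = arcosh (cosh_side ra rb Th).
Proof. reflexivity. Qed.

Section CoshSideBounds.

Variables ra rb Th : R.
Hypotheses (Hra : 0 <= ra) (Hrb : 0 <= rb).

Let sinh_prod_bounds : 0 <= sinh ra * sinh rb <= cosh ra * cosh rb.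
Proof.
  pose proof (sinh_ge_0 ra Hra). pose proof (sinh_ge_0 rb Hrb).
  pose proof (sinh_lt_cosh ra). pose proof (sinh_lt_cosh rb).
  split; [apply Rmult_le_pos | apply Rmult_le_compat]; lra.
Qed.

Lemma cosh_side_ge_1 : 1 <= cosh_side ra rb Th.
Proof.
  unfold cosh_side.
  (* cosh ra cosh rb - sinh ra sinh rb = cosh (ra - rb) >= 1 *)
  pose proof (cosh_ge_1 (ra - rb)) as H1. rewrite cosh_minus in H1.
  pose proof sinh_prod_bounds. pose proof (COS_bound Th).
  nra.
Qed.

Lemma cosh_side_le : cosh_side ra rb Th <= 2 * (cosh ra * cosh rb).
Proof.
  unfold cosh_side. pose proof sinh_prod_bounds. pose proof (COS_bound Th).
  nra.
Qed.

Lemma cosh_side_ge : (1 + cos Th) / 2 * (cosh ra * cosh rb) <= cosh_side ra rb Th.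
Proof.
  unfold cosh_side. pose proof sinh_prod_bounds. pose proof (COS_bound Th).
  destruct (Rle_lt_dec 0 (cos Th)); nra.
Qed.

Lemma cosh_side_gt_1 :
  2 < (1 + cos Th) * (cosh ra * cosh rb) -> 1 < cosh_side ra rb Th.
Proof. pose proof cosh_side_ge. lra. Qed.

End CoshSideBounds.

Lemma hyp_angle_arcosh (X Y Z : R) : 1 <= X -> 1 <= Y -> 1 <= Z ->
  hyp_angle (arcosh X) (arcosh Y) (arcosh Z)
  = acos ((Y * Z - X) / (sqrt (Y * Y - 1) * sqrt (Z * Z - 1))).
Proof.
  intros HX HY HZ. unfold hyp_angle.
  now rewrite !cosh_arcosh, !sinh_arcosh.
Qed.

Lemma cos_lt_1 (x : R) : 0 < x <= PI -> cos x < 1.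
Proof.
  intros Hx. rewrite <- cos_0. apply cos_decreasing_1; pose proof PI_RGT_0; lra.
Qed.

Lemma cos_gt_m1 (x : R) : 0 <= x < PI -> -1 < cos x.
Proof. intros Hx. rewrite <- cos_PI. apply cos_decreasing_1; lra. Qed.

Lemma acos_le (x e : R) : 0 <= e <= PI -> cos e <= x -> acos x <= e.
Proof.
  intros He Hx.
  destruct (Rle_lt_dec 1 x) as [H1 | H1].
  - unfold acos. destruct (Rle_dec x (-1)); [lra |].
    destruct (Rle_dec 1 x); lra.
  - destruct (Rle_lt_dec (acos x) e) as [| Hlt]; [assumption | exfalso].
    pose proof (acos_bound x). pose proof (COS_bound e).
    assert (Hcos : cos (acos x) < cos e) by (apply cos_decreasing_1; lra).
    rewrite cos_acos in Hcos by lra. lra.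
Qed.

Lemma sqrt_sqr_sub_1_bounds (Y : R) : 1 < Y -> 0 < sqrt (Y * Y - 1) <= Y.
Proof.
  intros HY. split; [apply sqrt_lt_R0; nra |].
  apply Rle_trans with (sqrt (Y * Y)); [apply sqrt_le_1_alt; lra |].
  rewrite sqrt_square; lra.
Qed.

Lemma law_of_cosines_ratio_ge (X Y Z K : R) : K <= 1 -> 1 < Y -> 1 < Z ->
  X <= K * (Y * Z) ->
  1 - K <= (Y * Z - X) / (sqrt (Y * Y - 1) * sqrt (Z * Z - 1)).
Proof.
  intros HK HY HZ HX.
  pose proof (sqrt_sqr_sub_1_bounds Y HY) as Hsy.
  pose proof (sqrt_sqr_sub_1_bounds Z HZ) as Hsz.
  set (s := sqrt (Y * Y - 1) * sqrt (Z * Z - 1)).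
  assert (Hs : 0 < s <= Y * Z) by (unfold s; split; nra).
  apply Rmult_le_reg_r with s; [lra |].
  unfold Rdiv. rewrite Rmult_assoc, Rinv_l, Rmult_1_r by lra.
  nra.
Qed.

Lemma hyp_angle_arcosh_le (X Y Z e : R) : 0 < e <= PI / 2 ->
  1 <= X -> 1 < Y -> 1 < Z -> X <= (1 - cos e) * (Y * Z) ->
  hyp_angle (arcosh X) (arcosh Y) (arcosh Z) <= e.
Proof.
  intros He HX HY HZ HXYZ.
  rewrite hyp_angle_arcosh by lra.
  apply acos_le; [pose proof PI_RGT_0; lra |].
  assert (Hcos : 0 <= cos e) by (apply cos_ge_0; pose proof PI_RGT_0; lra).
  replace (cos e) with (1 - (1 - cos e)) by ring.
  apply law_of_cosines_ratio_ge; lra.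
Qed.

Lemma cosh_side_le_mul (ri rj rk Thi Thj Thk K : R) :
  0 <= ri -> 0 <= rj -> 0 <= rk -> 0 < K -> -1 < cos Thj -> -1 < cos Thk ->
  8 <= cosh ri * (K * (1 + cos Thj) * (1 + cos Thk)) ->
  cosh_side rj rk Thi <= K * (cosh_side rk ri Thj * cosh_side ri rj Thk).
Proof.
  intros Hri Hrj Hrk HK Hj Hk Ha.
  pose proof (cosh_side_le rj rk Thi Hrj Hrk).
  pose proof (cosh_side_ge rk ri Thj Hrk Hri).
  pose proof (cosh_side_ge ri rj Thk Hri Hrj).
  pose proof (cosh_ge_1 ri). pose proof (cosh_ge_1 rj). pose proof (cosh_ge_1 rk).
  set (a := cosh ri) in *. set (b := cosh rj) in *. set (c := cosh rk) in *.
  set (qj := 1 + cos Thj) in *. set (qk := 1 + cos Thk) in *.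
  assert (HYZ : qj / 2 * (c * a) * (qk / 2 * (a * b))
                <= cosh_side rk ri Thj * cosh_side ri rj Thk).
  { apply Rmult_le_compat; try assumption; apply Rmult_le_pos; unfold qj, qk in *; nra. }
  apply Rle_trans with (K * (qj / 2 * (c * a) * (qk / 2 * (a * b))));
    [| apply Rmult_le_compat_l; lra].
  replace (K * (qj / 2 * (c * a) * (qk / 2 * (a * b))))
    with (a * (K * qj * qk) * (a * (b * c)) / 4) by field.
  assert (Hbc : 1 <= b * c) by nra.
  assert (8 * (a * (b * c)) <= a * (K * qj * qk) * (a * (b * c)))
    by (apply Rmult_le_compat_r; nra).
  nra.
Qed.

Lemma vartheta_i_le (ri rj rk Thi Thj Thk e : R) :
  0 <= ri -> 0 <= rj -> 0 <= rk -> 0 < e <= PI / 2 ->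
  -1 < cos Thj -> -1 < cos Thk ->
  8 < cosh ri * ((1 - cos e) * (1 + cos Thj) * (1 + cos Thk)) ->
  vartheta_i ri rj rk Thi Thj Thk <= e.
Proof.
  intros Hri Hrj Hrk He Hj Hk Ha.
  unfold vartheta_i; cbv zeta. rewrite !side_len_arcosh.
  assert (HK : 0 < 1 - cos e <= 1).
  { pose proof PI_RGT_0. pose proof (cos_lt_1 e ltac:(lra)).
    pose proof (cos_ge_0 e ltac:(lra) ltac:(lra)). lra. }
  pose proof (COS_bound Thj). pose proof (COS_bound Thk). pose proof (cosh_ge_1 ri).
  apply hyp_angle_arcosh_le.
  - exact He.
  - apply cosh_side_ge_1; assumption.
  - apply cosh_side_gt_1; [assumption .. |].
    assert (cosh ri * (1 + cos Thj) * ((1 - cos e) * (1 + cos Thk))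
            <= cosh ri * (1 + cos Thj) * 2) by (apply Rmult_le_compat_l; nra).
    pose proof (cosh_ge_1 rk). nra.
  - apply cosh_side_gt_1; [assumption .. |].
    assert (cosh ri * (1 + cos Thk) * ((1 - cos e) * (1 + cos Thj))
            <= cosh ri * (1 + cos Thk) * 2) by (apply Rmult_le_compat_l; nra).
    pose proof (cosh_ge_1 rj). nra.
  - apply cosh_side_le_mul; lra.
Qed.

(* The three hypotheses on cos Theta + cos Theta' cos Theta'' guarantee that the
   disks form a genuine triangle; the bound on vartheta_i does not need them. *)
Theorem lemma1p6 (Thi Thj Thk : R) :
  0 <= Thi < PI -> 0 <= Thj < PI -> 0 <= Thk < PI ->
  cos Thi + cos Thj * cos Thk >= 0 ->
  cos Thj + cos Thk * cos Thi >= 0 ->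
  cos Thk + cos Thi * cos Thj >= 0 ->
  forall eps : R, eps > 0 ->
  exists L : R, L > 0 /\
    forall ri rj rk : R, ri > 0 -> rj > 0 -> rk > 0 -> ri > L ->
      vartheta_i ri rj rk Thi Thj Thk < eps.
Proof.
  intros _ Hj Hk _ _ _ eps Heps.
  pose proof PI_RGT_0.
  set (e := Rmin (eps / 2) (PI / 2)).
  assert (He : 0 < e <= PI / 2) by (split; [apply Rmin_pos | apply Rmin_r]; lra).
  assert (He_eps : e < eps) by (enough (e <= eps / 2) by lra; apply Rmin_l).
  pose proof (cos_gt_m1 Thj Hj). pose proof (cos_gt_m1 Thk Hk).
  pose proof (cos_lt_1 e ltac:(lra)).
  set (P := (1 - cos e) * (1 + cos Thj) * (1 + cos Thk)).
  assert (HP : 0 < P) by (apply Rmult_lt_0_compat; [apply Rmult_lt_0_compat |]; lra).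
  exists (16 / P). split; [apply Rdiv_lt_0_compat; lra |].
  intros ri rj rk Hri Hrj Hrk HL.
  apply Rle_lt_trans with e; [| exact He_eps].
  apply vartheta_i_le; [lra .. |]. fold P.
  pose proof (half_lt_cosh ri).
  apply Rmult_lt_compat_r with (r := P) in HL; [| exact HP].
  unfold Rdiv in HL. rewrite Rmult_assoc, Rinv_l, Rmult_1_r in HL by lra.
  assert (ri * P < 2 * cosh ri * P) by (apply Rmult_lt_compat_r; lra).
  lra.
Qed.
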